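(* Let $n\ge 3$ and let $\alpha: I\to\mathbb{E}^n$ be an arclength parameterized curve with non-zero curvatures $\kappa_1,\dots,\kappa_{n-1}$. Then $\alpha$ is congruent to a rectifying curve if and only if, for some constant $c\in\mathbb{R}$, $$\kappa_{n-1}(s)\sum_{k=0}^{n-4}\mu_{n-3,k}(s)\frac{d^k}{ds^k}\left(\frac{\kappa_1(s)}{\kappa_2(s)}\right)+\sum_{k=0}^{n-3}\left(\mu_{n-2,k}(s)\frac{d^k}{ds^k}\left(\frac{\kappa_1(s)}{\kappa_2(s)}\right)\right)'=0,$$ where the functions $\mu_{i,k}$ are defined inductively by: $\mu_{1,0}(s)=s+c$; $\mu_{2,0}(s)=\frac{1}{\kappa_3(s)}$, $\mu_{2,1}(s)=\frac{s+c}{\kappa_3(s)}$; and for $i\in\{3,\dots,n-2\}$: $\mu_{i,0}=\frac{\kappa_i\mu_{i-2,0}+\mu_{i-1,0}'}{\kappa_{i+1}}$; $\mu_{i,k}=\frac{\kappa_i\mu_{i-2,k}+\mu_{i-1,k}'+\mu_{i-1,k-1}}{\kappa_{i+1}}$ for $k\in\{1,\dots,i-3\}$; $\mu_{i,i-2}=\frac{\mu_{i-1,i-3}+\mu_{i-1,i-2}'}{\kappa_{i+1}}$; $\mu_{i,i-1}=\frac{\mu_{i-1,i-2}}{\kappa_{i+1}}$. (Empty sums are zero.)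
   Context: For an arclength parameterized curve $\alpha$ in $\mathbb{E}^n$ that is $n$ times continuously differentiable, the Frenet frame $T,N,B_1,\dots,B_{n-2}$ is orthonormal and satisfies $T'=\kappa_1N$, $N'=-\kappa_1T+\kappa_2B_1$, $B_1'=-\kappa_2N+\kappa_3B_2$, $B_i'=-\kappa_{i+1}B_{i-1}+\kappa_{i+2}B_{i+1}$ for $i\in\{2,\dots,n-3\}$, $B_{n-2}'=-\kappa_{n-1}B_{n-3}$, where $\kappa_1,\dots,\kappa_{n-1}$ are the curvatures and $\kappa_1,\dots,\kappa_{n-2}>0$. ''Non-zero curvatures'' means no curvature is identically zero. A curve $\alpha$ is a rectifying curve if there is a fixed point $p$ such that for all $s$, $\langle\alpha(s)-p,N(s)\rangle=0$ (the orthogonal complement of $N(s)$ contains a fixed point). *)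

From Stdlib Require Import Reals Lra Lia Arith.
From Coquelicot Require Import Coquelicot.
Open Scope R_scope.

(* Points / vectors of E^n are represented as [nat -> R]; only the
   coordinates 0 .. n-1 are meaningful. *)
Definition vec := nat -> R.

Fixpoint sumk (m : nat) (f : nat -> R) : R :=
  match m with
  | O => 0
  | S m' => sumk m' f + f m'
  end.

Definition dot (n : nat) (u v : vec) : R := sumk n (fun i => u i * v i).

Definition in_I (a b : Rbar) (s : R) : Prop := Rbar_lt a s /\ Rbar_lt s b.

Definition smooth_on (a b : Rbar) (f : R -> R) : Prop :=
  forall (m : nat) (s : R), in_I a b s -> ex_derive_n f m s.

(* Frenet apparatus of an arclength parameterized curve alpha in E^n on I:
   E 0 = T, E 1 = N, E (j+1) = B_j (1 <= j <= n-2);  kap j = kappa_j (1<=j<=n-1).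
   - alpha' = T (so alpha is arclength parameterized since |T| = 1),
   - the frame is orthonormal,
   - the Frenet equations  E_j' = - kappa_j E_{j-1} + kappa_{j+1} E_{j+1}
     (the first term absent for j = 0, the second absent for j = n-1),
     which is exactly T' = k1 N, N' = -k1 T + k2 B1, B_i' = ..., B_{n-2}' = -k_{n-1} B_{n-3},
   - kappa_1, ..., kappa_{n-2} > 0. *)
Definition frenet_apparatus (n : nat) (a b : Rbar) (alpha : R -> vec)
  (E : nat -> R -> vec) (kap : nat -> R -> R) : Prop :=
  (forall s, in_I a b s -> forall i, (i < n)%nat ->
     is_derive (fun t => alpha t i) s (E 0%nat s i)) /\
  (forall s, in_I a b s -> forall j k, (j < n)%nat -> (k < n)%nat ->
     dot n (E j s) (E k s) = if Nat.eqb j k then 1 else 0) /\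
  (forall s, in_I a b s -> forall j i, (j < n)%nat -> (i < n)%nat ->
     is_derive (fun t => E j t i) s
       ((if Nat.eqb j 0 then 0 else - kap j s * E (j - 1)%nat s i) +
        (if Nat.ltb (j + 1) n then kap (j + 1)%nat s * E (j + 1)%nat s i else 0))) /\
  (forall s, in_I a b s -> forall j, (1 <= j <= n - 2)%nat -> 0 < kap j s).

Definition second_deriv (beta : R -> vec) (s : R) : vec :=
  fun i => Derive_n (fun t => beta t i) 2 s.

Definition principal_normal (n : nat) (beta : R -> vec) (s : R) : vec :=
  fun i => second_deriv beta s i / sqrt (dot n (second_deriv beta s) (second_deriv beta s)).

Definition rectifying (n : nat) (a b : Rbar) (beta : R -> vec) : Prop :=
  exists p : vec, forall s, in_I a b s ->
    dot n (fun i => beta s i - p i) (principal_normal n beta s) = 0.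

Definition orthogonal_mx (n : nat) (Q : nat -> nat -> R) : Prop :=
  forall i j, (i < n)%nat -> (j < n)%nat ->
    sumk n (fun k => Q k i * Q k j) = if Nat.eqb i j then 1 else 0.

Definition rigid_image (n : nat) (Q : nat -> nat -> R) (v : vec) (alpha : R -> vec)
  : R -> vec :=
  fun s i => sumk n (fun j => Q i j * alpha s j) + v i.

Definition congruent_to_rectifying (n : nat) (a b : Rbar) (alpha : R -> vec) : Prop :=
  exists (Q : nat -> nat -> R) (v : vec),
    orthogonal_mx n Q /\ rectifying n a b (rigid_image n Q v alpha).

(* The functions mu_{i,k}.  A family mu_i is a function k |-> (s |-> mu_{i,k}(s));
   values for k outside {0,...,i-1} are set to 0 (never used). *)
Definition mu1 (c : R) : nat -> R -> R :=
  fun k s => if Nat.eqb k 0 then s + c else 0.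

Definition mu2 (kap : nat -> R -> R) (c : R) : nat -> R -> R :=
  fun k s => if Nat.eqb k 0 then 1 / kap 3%nat s
             else if Nat.eqb k 1 then (s + c) / kap 3%nat s else 0.

(* mu_i from m2 = mu_{i-2} and m1 = mu_{i-1}, for i >= 3 *)
Definition mu_step (kap : nat -> R -> R) (i : nat) (m2 m1 : nat -> R -> R)
  : nat -> R -> R :=
  fun k s =>
    if Nat.eqb k 0 then
      (kap i s * m2 0%nat s + Derive (m1 0%nat) s) / kap (i + 1)%nat s
    else if Nat.leb k (i - 3) then
      (kap i s * m2 k s + Derive (m1 k) s + m1 (k - 1)%nat s) / kap (i + 1)%nat s
    else if Nat.eqb k (i - 2) then
      (m1 (i - 3)%nat s + Derive (m1 (i - 2)%nat) s) / kap (i + 1)%nat s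
    else if Nat.eqb k (i - 1) then
      m1 (i - 2)%nat s / kap (i + 1)%nat s
    else 0.

(* mu_aux j = (mu_{j+1}, mu_{j+2}) *)
Fixpoint mu_aux (kap : nat -> R -> R) (c : R) (j : nat)
  : (nat -> R -> R) * (nat -> R -> R) :=
  match j with
  | O => (mu1 c, mu2 kap c)
  | S j' => let (p, q) := mu_aux kap c j' in (q, mu_step kap (j' + 3) p q)
  end.

(* mu kap c i k s = mu_{i,k}(s)  (i >= 1; mu_0 := 0, only occurring in empty sums) *)
Definition mu (kap : nat -> R -> R) (c : R) (i : nat) : nat -> R -> R :=
  match i with
  | O => fun _ _ => 0
  | S i' => fst (mu_aux kap c i')
  end.

Definition rect_lhs (n : nat) (kap : nat -> R -> R) (c : R) (s : R) : R :=
  let r := fun t => kap 1%nat t / kap 2%nat t in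
  kap (n - 1)%nat s *
    sumk (n - 3) (fun k => mu kap c (n - 3) k s * Derive_n r k s)
  + sumk (n - 2) (fun k =>
      Derive (fun t => mu kap c (n - 2) k t * Derive_n r k t) s).

(* Around a point [p], the coordinates [f j = <alpha - p, E j>] of the curve in its Frenet
   frame satisfy the linear system [f j' = [j = 0] - kappa_j f (j-1) + kappa_(j+1) f (j+1)],
   and conversely every solution of this system is the coordinate vector around some [p],
   because [alpha - sum_j f j E j] then has derivative zero.  The curve is rectifying about
   [p] iff [f 1 = 0].  Then [f 0 = s + c], and the equations for [j <= n - 2], solved for
   [f (j+1)], force [f (j+1) = sum_k mu_(j,k) (kappa_1/kappa_2)^(k)]; the last equation
   [j = n - 1] is exactly the stated condition.  Congruences do not matter, since an
   orthogonal map carries the principal normal of [alpha] to that of its image. *)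

From Stdlib Require Import Reals Lra Lia Arith.
From Coquelicot Require Import Coquelicot.
Open Scope R_scope.

Lemma in_I_locally a b s : in_I a b s -> locally s (in_I a b).
Proof.
  intros Hs. apply (locally_open (in_I a b)); auto.
  apply open_and; [apply open_Rbar_gt | apply open_Rbar_lt].
Qed.

Lemma in_I_between a b x y t : in_I a b x -> in_I a b y -> x <= t <= y -> in_I a b t.
Proof.
  unfold in_I; intros [Hax Hxb] [Hay Hyb] [Hxt Hty]; split.
  - destruct a; simpl in *; auto; lra.
  - destruct b; simpl in *; auto; lra.
Qed.

Lemma in_I_inhabited a b : Rbar_lt a b -> exists s, in_I a b s.
Proof.
  unfold in_I; destruct a as [a| |], b as [b| |]; simpl; intros Hab; try tauto.
  - exists ((a + b) / 2); lra.
  - exists (a + 1); lra.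
  - exists (b - 1); lra.
  - exists 0; auto.
Qed.

Lemma is_derive_0_const_on_I a b (g : R -> R) :
  (forall s, in_I a b s -> is_derive g s 0) ->
  forall x y, in_I a b x -> in_I a b y -> g x = g y.
Proof.
  intros Hg x y Hx Hy.
  destruct (Rtotal_order x y) as [Hxy | [-> | Hyx]]; auto.
  - apply eq_is_derive; auto. intros t Ht. apply Hg, (in_I_between a b x y); auto.
  - symmetry. apply eq_is_derive; auto. intros t Ht. apply Hg, (in_I_between a b y x); auto.
Qed.

Lemma is_derive_unique_on_I a b (f g : R -> R) s l l' :
  (forall t, in_I a b t -> f t = g t) -> in_I a b s ->
  is_derive f s l -> is_derive g s l' -> l = l'.
Proof.
  intros Hfg Hs Hf Hg.
  apply (is_derive_ext_loc f g) in Hf.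
  - rewrite <- (is_derive_unique g s l), <- (is_derive_unique g s l'); auto.
  - apply (filter_imp (in_I a b)); auto. apply in_I_locally; auto.
Qed.

Lemma Derive_ext_on_I a b (f g : R -> R) s :
  (forall t, in_I a b t -> f t = g t) -> in_I a b s -> Derive f s = Derive g s.
Proof.
  intros Hfg Hs. apply Derive_ext_loc.
  apply (filter_imp (in_I a b)); auto. apply in_I_locally; auto.
Qed.

(* Coquelicot's rules state derivatives with the generic [plus], [mult], [one], [zero];
   these restatements use the operations of [R], so that [ring] and [lra] see through them. *)
Lemma is_derive_Rconst (c s : R) : is_derive (fun _ => c) s 0.
Proof. exact (is_derive_const c s). Qed.

Lemma is_derive_Rid (s : R) : is_derive (fun t => t) s 1.
Proof. exact (is_derive_id s). Qed.

Lemma is_derive_Rplus (f g : R -> R) s df dg :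
  is_derive f s df -> is_derive g s dg -> is_derive (fun t => f t + g t) s (df + dg).
Proof. exact (is_derive_plus f g s df dg). Qed.

Lemma is_derive_Rminus (f g : R -> R) s df dg :
  is_derive f s df -> is_derive g s dg -> is_derive (fun t => f t - g t) s (df - dg).
Proof. exact (is_derive_minus f g s df dg). Qed.

Lemma is_derive_Rmult (f g : R -> R) s df dg :
  is_derive f s df -> is_derive g s dg ->
  is_derive (fun t => f t * g t) s (df * g s + f s * dg).
Proof. intros Hf Hg. exact (is_derive_mult f g s df dg Hf Hg Rmult_comm). Qed.

Lemma is_derive_eq (f : R -> R) s (l l' : R) : is_derive f s l -> l = l' -> is_derive f s l'.
Proof. intros H <-; exact H. Qed.

Lemma sumk_ext m f g : (forall j, (j < m)%nat -> f j = g j) -> sumk m f = sumk m g.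
Proof. induction m; simpl; intros H; auto. rewrite IHm, H; auto. Qed.

Lemma sumk_plus m f g : sumk m (fun j => f j + g j) = sumk m f + sumk m g.
Proof. induction m; simpl; [lra|]. rewrite IHm; lra. Qed.

Lemma sumk_scal m c f : sumk m (fun j => c * f j) = c * sumk m f.
Proof. induction m; simpl; [lra|]. rewrite IHm; lra. Qed.

Lemma sumk_minus m f g : sumk m (fun j => f j - g j) = sumk m f - sumk m g.
Proof. induction m; simpl; [lra|]. rewrite IHm; lra. Qed.

Lemma sumk_scal_r m f c : sumk m (fun j => f j * c) = sumk m f * c.
Proof. induction m; simpl; [lra|]. rewrite IHm; lra. Qed.

Lemma sumk_swap m k (g : nat -> nat -> R) :
  sumk m (fun i => sumk k (fun j => g i j)) = sumk k (fun j => sumk m (fun i => g i j)).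
Proof.
  induction m; simpl.
  - induction k; simpl; [reflexivity | rewrite <- IHk; ring].
  - rewrite IHm, <- sumk_plus. reflexivity.
Qed.

Lemma sumk_Sl m f : sumk (S m) f = f 0%nat + sumk m (fun j => f (S j)).
Proof. induction m; simpl in *; [lra|]. rewrite IHm; lra. Qed.

Lemma sumk_zero_tail m m' f : (m <= m')%nat ->
  (forall j, (m <= j < m')%nat -> f j = 0) -> sumk m' f = sumk m f.
Proof.
  induction 1 as [|m' Hm IH]; intros Hf; auto.
  simpl. rewrite IH, (Hf m'); [ring | lia | intros; apply Hf; lia].
Qed.

Lemma sumk_delta m j g : (j < m)%nat ->
  sumk m (fun l => (if Nat.eqb j l then 1 else 0) * g l) = g j.
Proof.
  intros Hj.
  assert (Hoff : forall l, j <> l -> (if Nat.eqb j l then 1 else 0) * g l = 0)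
    by (intros l Hl; apply Nat.eqb_neq in Hl; rewrite Hl; ring).
  rewrite (sumk_zero_tail (S j) m) by first [lia | intros; apply Hoff; lia].
  simpl. rewrite Nat.eqb_refl, (sumk_zero_tail 0 j) by first [lia | intros; apply Hoff; lia].
  simpl. ring.
Qed.

Lemma sumk_telescope m (d : nat -> R) :
  sumk (S m) (fun j => d j - (if Nat.eqb j 0 then 0 else d (j - 1)%nat)) = d m.
Proof.
  induction m; [simpl; ring|].
  change (sumk (S (S m)) ?f) with (sumk (S m) f + f (S m)).
  rewrite IHm. simpl. rewrite Nat.sub_0_r. ring.
Qed.

Lemma is_derive_sumk m (g : nat -> R -> R) dg s :
  (forall j, (j < m)%nat -> is_derive (g j) s (dg j)) ->
  is_derive (fun t => sumk m (fun j => g j t)) s (sumk m dg).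
Proof.
  induction m; simpl; intros H.
  - apply is_derive_Rconst.
  - apply (is_derive_Rplus (fun t => sumk m (fun j => g j t)) (g m)); auto.
Qed.

Lemma Derive_sumk m (g : nat -> R -> R) s :
  (forall j, (j < m)%nat -> ex_derive (g j) s) ->
  Derive (fun t => sumk m (fun j => g j t)) s = sumk m (fun j => Derive (g j) s).
Proof.
  intros H. apply is_derive_unique, is_derive_sumk.
  intros j Hj. apply Derive_correct; auto.
Qed.

(** * Smooth functions on an interval *)

Definition Ck_on (a b : Rbar) (k : nat) (f : R -> R) : Prop :=
  forall s, in_I a b s -> forall j, (j <= k)%nat -> ex_derive_n f j s.

(* Order 0 is excluded: [ex_derive_n f 0 s] is [True] for every [f]. *)
Lemma ex_derive_n_Derive f j s :
  ex_derive_n (Derive f) (S j) s <-> ex_derive_n f (S (S j)) s.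
Proof.
  assert (Hcomp : forall t, Derive_n (Derive f) j t = Derive_n f (S j) t).
  { intros t. rewrite <- Nat.add_1_r. exact (Derive_n_comp f j 1 t). }
  split; apply ex_derive_ext; intros t; [ | symmetry]; apply Hcomp.
Qed.

Lemma Ck_on_S a b k f :
  Ck_on a b (S k) f <->
  (forall s, in_I a b s -> ex_derive f s) /\ Ck_on a b k (Derive f).
Proof.
  split.
  - intros H; split.
    + intros s Hs. apply (H s Hs 1%nat); lia.
    + intros s Hs [|j] Hj; [exact I|].
      apply (proj2 (ex_derive_n_Derive f j s)), H; auto; lia.
  - intros [H1 H2] s Hs [|[|j]] Hj.
    + exact I.
    + change (ex_derive f s). exact (H1 s Hs).
    + apply (proj1 (ex_derive_n_Derive f j s)), H2; auto; lia.
Qed.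

Lemma Ck_on_ext a b k f g :
  (forall s, in_I a b s -> f s = g s) -> Ck_on a b k f -> Ck_on a b k g.
Proof.
  intros Hfg H s Hs j Hj. apply (ex_derive_n_ext_loc f g).
  - apply (filter_imp (in_I a b)); auto. apply in_I_locally; auto.
  - apply H; auto.
Qed.

Lemma Ck_on_0 a b f : Ck_on a b 0 f.
Proof. intros s _ j Hj. replace j with 0%nat by lia. exact I. Qed.

Lemma Ck_on_le a b k k' f : (k' <= k)%nat -> Ck_on a b k f -> Ck_on a b k' f.
Proof. intros Hk H s Hs j Hj. apply H; auto; lia. Qed.

Lemma Ck_on_const a b k c : Ck_on a b k (fun _ => c).
Proof. intros s _ j _. apply ex_derive_n_const. Qed.

Lemma Ck_on_plus a b k : forall f g,
  Ck_on a b k f -> Ck_on a b k g -> Ck_on a b k (fun x => f x + g x).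
Proof.
  induction k; intros f g Hf Hg; [apply Ck_on_0|].
  apply Ck_on_S in Hf as [Hf1 Hf2], Hg as [Hg1 Hg2].
  apply Ck_on_S; split.
  - intros s Hs. exact (ex_derive_plus f g s (Hf1 s Hs) (Hg1 s Hs)).
  - apply (Ck_on_ext a b k (fun x => Derive f x + Derive g x)); auto.
    intros s Hs. rewrite Derive_plus; auto.
Qed.

Lemma Ck_on_mult a b k : forall f g,
  Ck_on a b k f -> Ck_on a b k g -> Ck_on a b k (fun x => f x * g x).
Proof.
  induction k; intros f g Hf Hg; [apply Ck_on_0|].
  assert (Hf0 := Ck_on_le a b (S k) k f (Nat.le_succ_diag_r k) Hf).
  assert (Hg0 := Ck_on_le a b (S k) k g (Nat.le_succ_diag_r k) Hg).
  apply Ck_on_S in Hf as [Hf1 Hf2], Hg as [Hg1 Hg2].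
  apply Ck_on_S; split.
  - intros s Hs. exact (ex_derive_mult f g s (Hf1 s Hs) (Hg1 s Hs)).
  - apply (Ck_on_ext a b k (fun x => Derive f x * g x + f x * Derive g x)).
    + intros s Hs. rewrite Derive_mult; auto.
    + apply Ck_on_plus; apply IHk; auto.
Qed.

Lemma Ck_on_inv a b k : forall f,
  Ck_on a b k f -> (forall s, in_I a b s -> f s <> 0) -> Ck_on a b k (fun x => / f x).
Proof.
  induction k; intros f Hf Hnz; [apply Ck_on_0|].
  assert (Hf0 := Ck_on_le a b (S k) k f (Nat.le_succ_diag_r k) Hf).
  apply Ck_on_S in Hf as [Hf1 Hf2].
  apply Ck_on_S; split.
  - intros s Hs. exact (ex_derive_inv f s (Hf1 s Hs) (Hnz s Hs)).
  - apply (Ck_on_ext a b k (fun x => (-1 * Derive f x) * (/ f x * / f x))).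
    + intros s Hs. rewrite Derive_inv; auto. field. auto.
    + apply Ck_on_mult; [apply Ck_on_mult; [apply Ck_on_const | auto] |].
      apply Ck_on_mult; apply IHk; auto.
Qed.

Lemma smooth_on_Ck_on a b f : smooth_on a b f <-> forall k, Ck_on a b k f.
Proof.
  split.
  - intros H k s Hs j _. apply H; auto.
  - intros H m s Hs. apply (H m s Hs m); lia.
Qed.

Lemma smooth_on_ext a b f g :
  (forall s, in_I a b s -> f s = g s) -> smooth_on a b f -> smooth_on a b g.
Proof.
  rewrite !smooth_on_Ck_on. intros Hfg H k. apply (Ck_on_ext a b k f); auto.
Qed.

Lemma smooth_on_const a b c : smooth_on a b (fun _ => c).
Proof. intros m s _. apply ex_derive_n_const. Qed.

Lemma smooth_on_id a b : smooth_on a b (fun x => x).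
Proof.
  intros m s _. apply (ex_derive_n_ext (fun x => x ^ 1)).
  - intros t; ring.
  - apply ex_derive_n_pow.
Qed.

Lemma smooth_on_plus a b f g :
  smooth_on a b f -> smooth_on a b g -> smooth_on a b (fun x => f x + g x).
Proof. rewrite !smooth_on_Ck_on. intros Hf Hg k. apply Ck_on_plus; auto. Qed.

Lemma smooth_on_mult a b f g :
  smooth_on a b f -> smooth_on a b g -> smooth_on a b (fun x => f x * g x).
Proof. rewrite !smooth_on_Ck_on. intros Hf Hg k. apply Ck_on_mult; auto. Qed.

Lemma smooth_on_div a b f g :
  smooth_on a b f -> smooth_on a b g -> (forall s, in_I a b s -> g s <> 0) ->
  smooth_on a b (fun x => f x / g x).
Proof.
  rewrite !smooth_on_Ck_on. intros Hf Hg Hnz k.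
  apply Ck_on_mult; [|apply Ck_on_inv]; auto.
Qed.

Lemma smooth_on_Derive a b f : smooth_on a b f -> smooth_on a b (Derive f).
Proof.
  intros H [|m] s Hs; [exact I|]. apply (proj2 (ex_derive_n_Derive f m s)), H; auto.
Qed.

Lemma smooth_on_Derive_n a b f k : smooth_on a b f -> smooth_on a b (Derive_n f k).
Proof. intros H. induction k; auto. apply smooth_on_Derive; auto. Qed.

Lemma smooth_on_ex_derive a b f s : smooth_on a b f -> in_I a b s -> ex_derive f s.
Proof. intros H Hs. exact (H 1%nat s Hs). Qed.

Lemma smooth_on_sumk a b m (g : nat -> R -> R) :
  (forall j, (j < m)%nat -> smooth_on a b (g j)) ->
  smooth_on a b (fun x => sumk m (fun j => g j x)).
Proof.
  induction m; intros H; simpl; [apply smooth_on_const|].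
  apply smooth_on_plus; auto.
Qed.

(** * The Frenet system *)

(* The coordinates [f j = <alpha - q, E j>] of a curve in its Frenet frame satisfy
   this linear system; the constant [1] comes from [alpha' = E 0]. *)
Definition frenet_rhs (n : nat) (kap f : nat -> R -> R) (j : nat) (s : R) : R :=
  (if Nat.eqb j 0 then 1 else - kap j s * f (j - 1)%nat s) +
  (if Nat.ltb (j + 1) n then kap (j + 1)%nat s * f (j + 1)%nat s else 0).

Definition frenet_eq (a b : Rbar) (n : nat) (kap f : nat -> R -> R) (j : nat) : Prop :=
  forall s, in_I a b s -> is_derive (f j) s (frenet_rhs n kap f j s).

Lemma frenet_eq_ext a b n kap f g j : (j < n)%nat ->
  (forall i s, (i < n)%nat -> in_I a b s -> f i s = g i s) ->
  frenet_eq a b n kap f j -> frenet_eq a b n kap g j.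
Proof.
  intros Hj Hfg Hf s Hs. apply (is_derive_ext_loc (f j)).
  - apply (filter_imp (in_I a b)); [intros; apply Hfg; auto | apply in_I_locally; auto].
  - eapply is_derive_eq; [apply Hf; auto|]. unfold frenet_rhs.
    destruct (Nat.eqb_spec j 0), (Nat.ltb_spec (j + 1) n);
      rewrite ?(Hfg (j - 1)%nat s), ?(Hfg (j + 1)%nat s) by (auto; lia); reflexivity.
Qed.

(* Each equation with [j + 1 < n] can be solved for [f (j + 1)] since [kap (j + 1) <> 0]. *)
Lemma frenet_eq_unique a b n kap f g :
  (forall j, (2 <= j <= n - 1)%nat -> forall s, in_I a b s -> kap j s <> 0) ->
  (forall j, (j + 1 < n)%nat -> frenet_eq a b n kap f j /\ frenet_eq a b n kap g j) ->
  (forall s, in_I a b s -> f 0%nat s = g 0%nat s) ->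
  (forall s, in_I a b s -> f 1%nat s = g 1%nat s) ->
  forall j s, (j < n)%nat -> in_I a b s -> f j s = g j s.
Proof.
  intros Hnz Heq H0 H1.
  assert (Hpair : forall j, (j + 1 < n)%nat -> forall s, in_I a b s ->
                    f j s = g j s /\ f (S j) s = g (S j) s).
  { induction j as [|j IH]; intros Hj s Hs; [auto|].
    assert (IH' : forall t, in_I a b t -> f j t = g j t /\ f (S j) t = g (S j) t)
      by (apply IH; lia).
    split; [apply IH'; auto|].
    destruct (Heq (S j) ltac:(lia)) as [Hf Hg].
    assert (Hd := is_derive_unique_on_I a b (f (S j)) (g (S j)) s _ _
                    (fun t Ht => proj2 (IH' t Ht)) Hs (Hf s Hs) (Hg s Hs)).
    unfold frenet_rhs in Hd. simpl Nat.eqb in Hd.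
    replace (S j - 1)%nat with j in Hd by lia.
    replace (Nat.ltb (S j + 1) n) with true in Hd by (symmetry; apply Nat.ltb_lt; lia).
    rewrite (proj1 (IH' s Hs)) in Hd.
    assert (Hk : kap (S j + 1)%nat s <> 0) by (apply Hnz; auto; lia).
    replace (S (S j)) with (S j + 1)%nat by lia.
    apply (Rmult_eq_reg_l (kap (S j + 1)%nat s)); auto; lra. }
  intros [|j] s Hj Hs; [auto|]. apply (Hpair j); auto; lia.
Qed.

Lemma frenet_eq_affine a b n kap f :
  Rbar_lt a b -> frenet_eq a b n kap f 0 -> (forall s, in_I a b s -> f 1%nat s = 0) ->
  exists c, forall s, in_I a b s -> f 0%nat s = s + c.
Proof.
  intros Hab Hf0 Hf1. destruct (in_I_inhabited a b Hab) as [s0 Hs0].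
  exists (f 0%nat s0 - s0). intros s Hs.
  enough (f 0%nat s - s = f 0%nat s0 - s0) by lra.
  apply (is_derive_0_const_on_I a b (fun t => f 0%nat t - t)); auto.
  intros t Ht. eapply is_derive_eq.
  - apply (is_derive_Rminus (f 0%nat) (fun t => t)); [apply Hf0; auto | apply is_derive_Rid].
  - unfold frenet_rhs; simpl. rewrite Hf1; auto. destruct (Nat.ltb 1 n); ring.
Qed.

(** * The functions mu *)

Lemma mu_SSS kap c j : mu kap c (S (S (S j))) =
  mu_step kap (S (S (S j))) (mu kap c (S j)) (mu kap c (S (S j))).
Proof.
  unfold mu. simpl. destruct (mu_aux kap c j) as [p q]. simpl.
  replace (j + 3)%nat with (S (S (S j))) by lia. reflexivity.
Qed.

Lemma mu_zero kap c i k s : (i <= k)%nat -> mu kap c i k s = 0.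
Proof.
  intros Hik. destruct i as [|[|[|j]]]; [reflexivity | | |].
  - simpl. unfold mu1. destruct k; [lia | reflexivity].
  - simpl. unfold mu2. destruct k as [|[|k]]; [lia | lia | reflexivity].
  - rewrite mu_SSS. unfold mu_step.
    replace (Nat.eqb k 0) with false by (symmetry; apply Nat.eqb_neq; lia).
    replace (Nat.leb k (S (S (S j)) - 3)) with false by (symmetry; apply Nat.leb_gt; lia).
    replace (Nat.eqb k (S (S (S j)) - 2)) with false by (symmetry; apply Nat.eqb_neq; lia).
    replace (Nat.eqb k (S (S (S j)) - 1)) with false by (symmetry; apply Nat.eqb_neq; lia).
    reflexivity.
Qed.

Lemma Derive_mu_zero kap c i k s : (i <= k)%nat -> Derive (mu kap c i k) s = 0.
Proof.
  intros Hik. rewrite (Derive_ext _ (fun _ => 0)); [apply Derive_const|].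
  intros t. apply mu_zero; auto.
Qed.

(* The four cases in the definition of [mu_{i,k}] are a single formula once one uses
   [mu_{i,k} = 0] for [k >= i] and [mu_{i,-1} = 0]; for [i = 2] it also covers [mu_2]. *)
Lemma mu_rec kap c j k s : (k < S (S j))%nat ->
  mu kap c (S (S j)) k s =
  (kap (S (S j)) s * mu kap c j k s + Derive (mu kap c (S j) k) s
   + match k with O => 0 | S k' => mu kap c (S j) k' s end) / kap (S (S (S j))) s.
Proof.
  intros Hk. destruct j as [|j].
  - simpl. unfold mu2, mu1. destruct k as [|[|k]]; [| | lia]; simpl.
    + assert (Hd : Derive (fun t => t + c) s = 1).
      { apply is_derive_unique. eapply is_derive_eq; [|apply Rplus_0_r].
        apply (is_derive_Rplus (fun t => t) (fun _ => c));
          [apply is_derive_Rid | apply is_derive_Rconst]. }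
      rewrite Hd. unfold Rdiv. ring.
    + rewrite Derive_const. unfold Rdiv. ring.
  - rewrite mu_SSS. unfold mu_step.
    replace (S (S (S j)) - 3)%nat with j by lia.
    replace (S (S (S j)) - 2)%nat with (S j) by lia.
    replace (S (S (S j)) - 1)%nat with (S (S j)) by lia.
    replace (S (S (S j)) + 1)%nat with (S (S (S (S j)))) by lia.
    destruct (Nat.eqb_spec k 0) as [->|Hk0]; [rewrite Rplus_0_r; reflexivity|].
    destruct (Nat.leb_spec k j).
    + destruct k as [|k]; [lia|]. rewrite Nat.sub_succ, Nat.sub_0_r. reflexivity.
    + destruct (Nat.eqb_spec k (S j)) as [->|Hk1].
      * rewrite (mu_zero kap c (S j) (S j)); auto. unfold Rdiv; ring.
      * replace k with (S (S j)) by lia. rewrite Nat.eqb_refl.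
        rewrite (mu_zero kap c (S j) (S (S j))), Derive_mu_zero by lia.
        unfold Rdiv; ring.
Qed.

Section MuCombination.

Variables (n : nat) (a b : Rbar) (kap : nat -> R -> R) (c : R).
Hypothesis n_ge3 : (3 <= n)%nat.
Hypothesis kap_smooth : forall j, (1 <= j <= n - 1)%nat -> smooth_on a b (kap j).
Hypothesis kap_neq0 :
  forall j, (1 <= j <= n - 1)%nat -> forall s, in_I a b s -> kap j s <> 0.

Definition curv_ratio (t : R) : R := kap 1%nat t / kap 2%nat t.

Definition mu_comb (i : nat) (s : R) : R :=
  sumk i (fun k => mu kap c i k s * Derive_n curv_ratio k s).

(* The Frenet coordinates [<alpha - p, E j>] forced on a curve rectifying about [p]. *)
Definition rect_coord (j : nat) : R -> R :=
  match j with O => fun t => t + c | S i => mu_comb i end.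

Lemma curv_ratio_smooth : smooth_on a b curv_ratio.
Proof. apply smooth_on_div; [apply kap_smooth | apply kap_smooth | apply kap_neq0]; lia. Qed.

Lemma mu_smooth i k : (i <= n - 2)%nat -> smooth_on a b (mu kap c i k).
Proof.
  revert k. induction i as [i IH] using lt_wf_ind. intros k Hi.
  destruct i as [|[|j]].
  - exact (smooth_on_const a b 0).
  - simpl. unfold mu1. destruct k; simpl.
    + apply smooth_on_plus; [apply smooth_on_id | apply smooth_on_const].
    + apply smooth_on_const.
  - destruct (Nat.lt_ge_cases k (S (S j))) as [Hk|Hk].
    + eapply smooth_on_ext; [intros s _; symmetry; apply mu_rec; auto|].
      apply smooth_on_div; [| apply kap_smooth; lia | apply kap_neq0; lia].
      assert (Hj : forall k', smooth_on a b (mu kap c j k')) by (intros; apply IH; lia).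
      assert (HSj : forall k', smooth_on a b (mu kap c (S j) k')) by (intros; apply IH; lia).
      apply smooth_on_plus; [apply smooth_on_plus|].
      * apply smooth_on_mult; [apply kap_smooth; lia | auto].
      * apply smooth_on_Derive; auto.
      * destruct k; [apply smooth_on_const | auto].
    + eapply smooth_on_ext; [intros s _; symmetry; apply mu_zero; auto|].
      apply smooth_on_const.
Qed.

Lemma mu_comb_smooth i : (i <= n - 2)%nat -> smooth_on a b (mu_comb i).
Proof.
  intros Hi. apply (smooth_on_sumk a b i (fun k t => mu kap c i k t * Derive_n curv_ratio k t)).
  intros k _. apply smooth_on_mult.
  - apply mu_smooth; auto.
  - apply smooth_on_Derive_n, curv_ratio_smooth.
Qed.

Lemma Derive_mu_comb i s : (i <= n - 2)%nat -> in_I a b s ->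
  Derive (mu_comb i) s =
  sumk i (fun k => Derive (mu kap c i k) s * Derive_n curv_ratio k s
                   + mu kap c i k s * Derive_n curv_ratio (S k) s).
Proof.
  intros Hi Hs.
  assert (Hr : forall k, smooth_on a b (Derive_n curv_ratio k))
    by (intros; apply smooth_on_Derive_n, curv_ratio_smooth).
  unfold mu_comb.
  rewrite (Derive_sumk i (fun k t => mu kap c i k t * Derive_n curv_ratio k t)).
  - apply sumk_ext; intros k _. rewrite Derive_mult; auto;
      eapply smooth_on_ex_derive; eauto; apply mu_smooth; auto.
  - intros k _. apply ex_derive_mult;
      eapply smooth_on_ex_derive; eauto; apply mu_smooth; auto.
Qed.

Lemma mu_comb_rec j s : (j + 4 <= n)%nat -> in_I a b s ->
  kap (S (S (S j))) s * mu_comb (S (S j)) s =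
  kap (S (S j)) s * mu_comb j s + Derive (mu_comb (S j)) s.
Proof.
  intros Hj Hs.
  assert (Hk : kap (S (S (S j))) s <> 0) by (apply kap_neq0; auto; lia).
  rewrite Derive_mu_comb, sumk_plus by (auto; lia). unfold mu_comb.
  rewrite <- sumk_scal.
  rewrite (sumk_ext _ _ (fun k => kap (S (S j)) s * (mu kap c j k s * Derive_n curv_ratio k s)
      + Derive (mu kap c (S j) k) s * Derive_n curv_ratio k s
      + match k with O => 0 | S k' => mu kap c (S j) k' s end * Derive_n curv_ratio k s)).
  2:{ intros k Hk'. rewrite mu_rec by auto. field. auto. }
  (* The three sums are [kap * mu_comb j] and the two halves of the product rule in
     [Derive (mu_comb (S j))], the second one shifted by one index. *)
  rewrite !sumk_plus, sumk_scal.
  rewrite (sumk_zero_tail j (S (S j)) (fun k => mu kap c j k s * Derive_n curv_ratio k s))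
    by (auto; intros k Hk'; rewrite mu_zero by lia; ring).
  rewrite (sumk_zero_tail (S j) (S (S j))
             (fun k => Derive (mu kap c (S j) k) s * Derive_n curv_ratio k s))
    by (auto; intros k Hk'; rewrite Derive_mu_zero by lia; ring).
  rewrite (sumk_Sl (S j)). cbv beta iota. ring.
Qed.

Lemma rect_lhs_mu_comb s : in_I a b s ->
  rect_lhs n kap c s = kap (n - 1)%nat s * mu_comb (n - 3) s + Derive (mu_comb (n - 2)) s.
Proof.
  intros Hs. unfold rect_lhs, mu_comb. cbv zeta. f_equal.
  rewrite (Derive_sumk (n - 2) (fun k t => mu kap c (n - 2) k t * Derive_n curv_ratio k t));
    [reflexivity|].
  intros k _. apply ex_derive_mult; eapply smooth_on_ex_derive; eauto.
  - apply mu_smooth; auto.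
  - apply smooth_on_Derive_n, curv_ratio_smooth.
Qed.

Lemma rect_coord_frenet_eq j : (j + 1 < n)%nat -> frenet_eq a b n kap rect_coord j.
Proof.
  intros Hj s Hs. unfold frenet_rhs.
  destruct j as [|[|i]]; simpl Nat.eqb; cbv iota.
  - replace (Nat.ltb (0 + 1) n) with true by (symmetry; apply Nat.ltb_lt; lia).
    eapply is_derive_eq.
    + apply (is_derive_Rplus (fun t => t) (fun _ => c));
        [apply is_derive_Rid | apply is_derive_Rconst].
    + simpl. unfold mu_comb; simpl. ring.
  - replace (Nat.ltb (1 + 1) n) with true by (symmetry; apply Nat.ltb_lt; lia).
    assert (Hk2 : kap 2%nat s <> 0) by (apply kap_neq0; auto; lia).
    eapply is_derive_eq; [apply (is_derive_Rconst 0 s)|].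
    simpl. unfold mu_comb, curv_ratio; simpl. unfold mu1; simpl. field. auto.
  - replace (Nat.ltb (S (S i) + 1) n) with true by (symmetry; apply Nat.ltb_lt; lia).
    replace (S (S i) - 1)%nat with (S i) by lia.
    replace (S (S i) + 1)%nat with (S (S (S i))) by lia. simpl rect_coord.
    eapply is_derive_eq.
    + apply Derive_correct. eapply smooth_on_ex_derive; eauto. apply mu_comb_smooth; lia.
    + rewrite mu_comb_rec by (auto; lia). ring.
Qed.

Lemma rect_coord_frenet_eq_last :
  frenet_eq a b n kap rect_coord (n - 1) <-> forall s, in_I a b s -> rect_lhs n kap c s = 0.
Proof.
  assert (Hrhs : forall s, frenet_rhs n kap rect_coord (n - 1) s =
                           - kap (n - 1)%nat s * mu_comb (n - 3) s).
  { intros s. unfold frenet_rhs.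
    replace (Nat.eqb (n - 1) 0) with false by (symmetry; apply Nat.eqb_neq; lia).
    replace (Nat.ltb (n - 1 + 1) n) with false by (symmetry; apply Nat.ltb_ge; lia).
    replace (n - 1 - 1)%nat with (S (n - 3)) by lia. simpl. ring. }
  assert (Hlast : rect_coord (n - 1) = mu_comb (n - 2))
    by (replace (n - 1)%nat with (S (n - 2)) by lia; reflexivity).
  unfold frenet_eq. rewrite Hlast. split.
  - intros Heq s Hs. rewrite rect_lhs_mu_comb, (is_derive_unique _ _ _ (Heq s Hs)), Hrhs
      by auto. ring.
  - intros Hlhs s Hs. rewrite Hrhs. eapply is_derive_eq.
    + apply Derive_correct. eapply smooth_on_ex_derive; eauto. apply mu_comb_smooth; lia.
    + assert (H := Hlhs s Hs). rewrite rect_lhs_mu_comb in H by auto. lra.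
Qed.

Lemma rect_coord_frenet_system :
  (forall s, in_I a b s -> rect_lhs n kap c s = 0) ->
  forall j, (j < n)%nat -> frenet_eq a b n kap rect_coord j.
Proof.
  intros Hlhs j Hj. destruct (Nat.lt_ge_cases (j + 1) n).
  - apply rect_coord_frenet_eq; auto.
  - replace j with (n - 1)%nat by lia. apply rect_coord_frenet_eq_last; auto.
Qed.

End MuCombination.

(** * Rigid motions and Frenet coordinates *)

Lemma dot_ext n x y x' y' : (forall i, (i < n)%nat -> x i = x' i) ->
  (forall i, (i < n)%nat -> y i = y' i) -> dot n x y = dot n x' y'.
Proof. intros Hx Hy. apply sumk_ext; intros i Hi. rewrite Hx, Hy; auto. Qed.

Lemma dot_ext_r n x y y' : (forall i, (i < n)%nat -> y i = y' i) -> dot n x y = dot n x y'.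
Proof. intros Hy. apply dot_ext; auto. Qed.

Lemma dot_scal_l n c x y : dot n (fun i => c * x i) y = c * dot n x y.
Proof. unfold dot. rewrite <- sumk_scal. apply sumk_ext; intros; ring. Qed.

Lemma dot_scal_r n c x y : dot n x (fun i => c * y i) = c * dot n x y.
Proof. unfold dot. rewrite <- sumk_scal. apply sumk_ext; intros; ring. Qed.

Lemma dot_plus_r n x y z : dot n x (fun i => y i + z i) = dot n x y + dot n x z.
Proof. unfold dot. rewrite <- sumk_plus. apply sumk_ext; intros; ring. Qed.

Lemma dot_zero_r n x : dot n x (fun _ => 0) = 0.
Proof. unfold dot. induction n; simpl; [|rewrite IHn]; ring. Qed.

Lemma dot_sumk_l n m (g : nat -> R) (X : nat -> vec) y :
  dot n (fun i => sumk m (fun l => g l * X l i)) y = sumk m (fun l => g l * dot n (X l) y).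
Proof.
  unfold dot. rewrite (sumk_ext n _ (fun i => sumk m (fun l => g l * (X l i * y i)))).
  - rewrite sumk_swap. apply sumk_ext; intros l _. apply sumk_scal.
  - intros i _. rewrite <- sumk_scal_r. apply sumk_ext; intros; ring.
Qed.

Lemma is_derive_dot n (X Y : R -> vec) dX dY s :
  (forall i, (i < n)%nat -> is_derive (fun t => X t i) s (dX i)) ->
  (forall i, (i < n)%nat -> is_derive (fun t => Y t i) s (dY i)) ->
  is_derive (fun t => dot n (X t) (Y t)) s (dot n dX (Y s) + dot n (X s) dY).
Proof.
  intros HX HY. unfold dot. rewrite <- sumk_plus.
  apply (is_derive_sumk n (fun i t => X t i * Y t i)). intros i Hi.
  apply (is_derive_Rmult (fun t => X t i) (fun t => Y t i)); auto.
Qed.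

Definition mx_apply (n : nat) (Q : nat -> nat -> R) (x : vec) : vec :=
  fun i => sumk n (fun j => Q i j * x j).

Definition mx_tapply (n : nat) (Q : nat -> nat -> R) (x : vec) : vec :=
  fun j => sumk n (fun i => Q i j * x i).

Lemma mx_apply_minus n Q x y i :
  mx_apply n Q (fun j => x j - y j) i = mx_apply n Q x i - mx_apply n Q y i.
Proof. unfold mx_apply. rewrite <- sumk_minus. apply sumk_ext; intros; ring. Qed.

Lemma mx_tapply_minus n Q x y j :
  mx_tapply n Q (fun i => x i - y i) j = mx_tapply n Q x j - mx_tapply n Q y j.
Proof. unfold mx_tapply. rewrite <- sumk_minus. apply sumk_ext; intros; ring. Qed.

Lemma dot_mx_apply_r n Q x y : dot n x (mx_apply n Q y) = dot n (mx_tapply n Q x) y.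
Proof.
  unfold dot, mx_apply, mx_tapply.
  rewrite (sumk_ext n _ (fun i => sumk n (fun j => Q i j * x i * y j))).
  - rewrite sumk_swap. apply sumk_ext; intros j _. apply sumk_scal_r.
  - intros i _. rewrite <- sumk_scal. apply sumk_ext; intros; ring.
Qed.

Lemma mx_tapply_apply n Q x j : orthogonal_mx n Q -> (j < n)%nat ->
  mx_tapply n Q (mx_apply n Q x) j = x j.
Proof.
  intros HQ Hj. unfold mx_tapply, mx_apply.
  rewrite (sumk_ext n _ (fun i => sumk n (fun l => Q i j * Q i l * x l))).
  - rewrite sumk_swap, <- (sumk_delta n j x) by auto. apply sumk_ext; intros l Hl.
    rewrite sumk_scal_r, HQ by auto. reflexivity.
  - intros i _. rewrite <- sumk_scal. apply sumk_ext; intros; ring.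
Qed.

Lemma dot_orthogonal n Q x y : orthogonal_mx n Q ->
  dot n (mx_apply n Q x) (mx_apply n Q y) = dot n x y.
Proof.
  intros HQ. rewrite dot_mx_apply_r. apply dot_ext; auto. intros; apply mx_tapply_apply; auto.
Qed.

Lemma is_derive_mx_apply n Q (X : R -> vec) dX s :
  (forall j, (j < n)%nat -> is_derive (fun t => X t j) s (dX j)) ->
  forall i, is_derive (fun t => mx_apply n Q (X t) i) s (mx_apply n Q dX i).
Proof.
  intros HX i. apply (is_derive_sumk n (fun j t => Q i j * X t j)).
  intros j Hj. apply is_derive_scal; auto.
Qed.

Lemma principal_normal_rigid_image n a b alpha E kap Q v :
  (3 <= n)%nat -> frenet_apparatus n a b alpha E kap -> orthogonal_mx n Q ->
  forall s, in_I a b s -> forall i,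
  principal_normal n (rigid_image n Q v alpha) s i = mx_apply n Q (E 1%nat s) i.
Proof.
  intros Hn (Ha & Ho & Hd & Hpos) HQ s Hs.
  assert (HE0 : forall i, (i < n)%nat ->
            is_derive (fun t => E 0%nat t i) s (kap 1%nat s * E 1%nat s i)).
  { intros i Hi. eapply is_derive_eq; [apply Hd; auto; lia|]. simpl.
    replace (Nat.ltb 1 n) with true by (symmetry; apply Nat.ltb_lt; lia). ring. }
  assert (D1 : forall t, in_I a b t -> forall i,
            Derive (fun t => rigid_image n Q v alpha t i) t = mx_apply n Q (E 0%nat t) i).
  { intros t Ht i. apply is_derive_unique. eapply is_derive_eq.
    - apply (is_derive_Rplus (fun t => mx_apply n Q (alpha t) i) (fun _ => v i));
        [apply is_derive_mx_apply; intros; apply Ha; auto | apply is_derive_Rconst].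
    - apply Rplus_0_r. }
  assert (D2 : forall i,
            second_deriv (rigid_image n Q v alpha) s i = kap 1%nat s * mx_apply n Q (E 1%nat s) i).
  { intros i. unfold second_deriv. change (Derive_n ?f 2 s) with (Derive (Derive f) s).
    rewrite (Derive_ext_on_I a b _ (fun t => mx_apply n Q (E 0%nat t) i)) by auto.
    apply is_derive_unique. eapply is_derive_eq.
    - apply (is_derive_mx_apply n Q (fun t => E 0%nat t) (fun j => kap 1%nat s * E 1%nat s j)).
      exact HE0.
    - unfold mx_apply; cbv beta. rewrite <- sumk_scal. apply sumk_ext; intros; ring. }
  assert (Hk : 0 < kap 1%nat s) by (apply Hpos; auto; lia).
  intros i. unfold principal_normal.
  rewrite (dot_ext n _ _ (fun i => kap 1%nat s * mx_apply n Q (E 1%nat s) i)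
                         (fun i => kap 1%nat s * mx_apply n Q (E 1%nat s) i)) by auto.
  rewrite dot_scal_l, dot_scal_r, dot_orthogonal, Ho, Nat.eqb_refl, D2 by (auto; lia).
  replace (kap 1%nat s * (kap 1%nat s * 1)) with (kap 1%nat s * kap 1%nat s) by ring.
  rewrite sqrt_square by lra. field. lra.
Qed.

Lemma rectifying_rigid_image_iff n a b alpha E kap Q v :
  (3 <= n)%nat -> frenet_apparatus n a b alpha E kap -> orthogonal_mx n Q ->
  rectifying n a b (rigid_image n Q v alpha) <->
  exists q, forall s, in_I a b s -> dot n (fun i => alpha s i - q i) (E 1%nat s) = 0.
Proof.
  intros Hn HF HQ. unfold rectifying. split.
  -
    intros [p Hp]. exists (mx_tapply n Q (fun i => p i - v i)). intros s Hs.
    rewrite <- (Hp s Hs).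
    rewrite (dot_ext_r n _ (principal_normal n (rigid_image n Q v alpha) s)
               (mx_apply n Q (E 1%nat s))), dot_mx_apply_r
      by (intros; eapply principal_normal_rigid_image; eauto).
    apply dot_ext; auto. intros j Hj.
    rewrite <- (mx_tapply_apply n Q (alpha s) j), <- mx_tapply_minus by auto.
    unfold mx_tapply. apply sumk_ext; intros i _. unfold rigid_image, mx_apply.
    cbv beta. ring.
  - intros [q Hq]. exists (fun i => mx_apply n Q q i + v i). intros s Hs.
    rewrite <- (Hq s Hs), <- (dot_orthogonal n Q (fun i => alpha s i - q i)) by auto.
    apply dot_ext.
    + intros i _. rewrite mx_apply_minus. unfold rigid_image, mx_apply. cbv beta. ring.
    + intros i _. eapply principal_normal_rigid_image; eauto.
Qed.

Definition frame_coord (n : nat) (alpha : R -> vec) (E : nat -> R -> vec) (q : vec)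
  (j : nat) (t : R) : R :=
  dot n (fun i => alpha t i - q i) (E j t).

Lemma frame_coord_frenet_eq n a b alpha E kap q j :
  frenet_apparatus n a b alpha E kap -> (j < n)%nat ->
  frenet_eq a b n kap (frame_coord n alpha E q) j.
Proof.
  intros (Ha & Ho & Hd & _) Hj s Hs. unfold frame_coord.
  eapply is_derive_eq.
  - apply (is_derive_dot n (fun t i => alpha t i - q i) (E j) (E 0%nat s));
      [|intros; apply Hd; auto].
    intros i Hi. eapply is_derive_eq.
    + apply (is_derive_Rminus (fun t => alpha t i) (fun _ => q i));
        [apply Ha; auto | apply is_derive_Rconst].
    + apply Rminus_0_r.
  - rewrite Ho, dot_plus_r by (auto; lia). unfold frenet_rhs.
    destruct j as [|j]; destruct (Nat.ltb _ n); simpl Nat.eqb; cbv iota;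
      rewrite ?dot_scal_r, ?dot_zero_r; ring.
Qed.

(* Differentiating [sum_j f_j E_j] for a solution [f] of the system leaves [E 0]:
   the curvature terms telescope. *)
Lemma sumk_frenet_telescope n kap (f : nat -> R -> R) (e : nat -> R) s : (1 <= n)%nat ->
  sumk n (fun j => frenet_rhs n kap f j s * e j + f j s *
    ((if Nat.eqb j 0 then 0 else - kap j s * e (j - 1)%nat) +
     (if Nat.ltb (j + 1) n then kap (j + 1)%nat s * e (j + 1)%nat else 0))) = e 0%nat.
Proof.
  intros Hn.
  set (d := fun j => if Nat.ltb (j + 1) n
                     then kap (j + 1)%nat s * (f (j + 1)%nat s * e j + f j s * e (j + 1)%nat)
                     else 0).
  rewrite (sumk_ext n _ (fun j => (if Nat.eqb 0 j then 1 else 0) * e j +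
             (d j - (if Nat.eqb j 0 then 0 else d (j - 1)%nat)))).
  - rewrite sumk_plus, sumk_delta by lia. destruct n as [|m]; [lia|].
    rewrite sumk_telescope. unfold d.
    replace (Nat.ltb (m + 1) (S m)) with false by (symmetry; apply Nat.ltb_ge; lia). ring.
  - intros j Hj. unfold frenet_rhs, d. destruct j as [|j]; simpl Nat.eqb; cbv iota.
    + destruct (Nat.ltb (0 + 1) n); ring.
    + rewrite Nat.sub_succ, Nat.sub_0_r.
      replace (Nat.ltb (j + 1) n) with true by (symmetry; apply Nat.ltb_lt; lia).
      replace (j + 1)%nat with (S j) by lia.
      destruct (Nat.ltb (S j + 1) n); ring.
Qed.

Lemma frenet_eq_frame_coord n a b alpha E kap f :
  (1 <= n)%nat -> Rbar_lt a b -> frenet_apparatus n a b alpha E kap ->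
  (forall j, (j < n)%nat -> frenet_eq a b n kap f j) ->
  exists p, forall s, in_I a b s -> forall j, (j < n)%nat -> frame_coord n alpha E p j s = f j s.
Proof.
  intros Hn Hab (Ha & Ho & Hd & _) Hf.
  set (P := fun i t => alpha t i - sumk n (fun j => f j t * E j t i)).
  assert (HP : forall i, (i < n)%nat -> forall s, in_I a b s -> is_derive (P i) s 0).
  { intros i Hi s Hs. eapply is_derive_eq.
    - apply (is_derive_Rminus (fun t => alpha t i)); [apply Ha; auto|].
      apply (is_derive_sumk n (fun j t => f j t * E j t i)). intros j Hj.
      apply (is_derive_Rmult (f j) (fun t => E j t i)); [apply Hf; auto | apply Hd; auto].
    - cbv beta. rewrite sumk_frenet_telescope by auto. ring. }
  destruct (in_I_inhabited a b Hab) as [s0 Hs0].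
  exists (fun i => P i s0). intros s Hs j Hj. unfold frame_coord.
  rewrite (dot_ext n _ (E j s) (fun i => sumk n (fun l => f l s * E l s i)) (E j s)); auto.
  - rewrite dot_sumk_l, <- (sumk_delta n j (fun l => f l s)) by auto.
    apply sumk_ext; intros l Hl. rewrite Ho, Nat.eqb_sym by auto. ring.
  - intros i Hi. rewrite <- (is_derive_0_const_on_I a b (P i) (HP i Hi) s s0 Hs Hs0).
    unfold P. ring.
Qed.

Lemma congruent_to_rectifying_iff n a b alpha E kap :
  (3 <= n)%nat -> frenet_apparatus n a b alpha E kap ->
  congruent_to_rectifying n a b alpha <->
  exists q, forall s, in_I a b s -> frame_coord n alpha E q 1 s = 0.
Proof.
  intros Hn HF. split.
  - intros (Q & v & HQ & Hr). eapply rectifying_rigid_image_iff; eauto.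
  - intros Hq.
    assert (HI : orthogonal_mx n (fun i j => if Nat.eqb i j then 1 else 0)).
    { intros i j Hi Hj.
      rewrite <- (sumk_delta n i (fun k => if Nat.eqb k j then 1 else 0)) by auto.
      apply sumk_ext; intros k _. rewrite (Nat.eqb_sym k i). ring. }
    exists (fun i j => if Nat.eqb i j then 1 else 0), (fun _ => 0). split; auto.
    eapply rectifying_rigid_image_iff; eauto.
Qed.

Lemma frenet_curvature_neq0 n a b alpha E kap :
  frenet_apparatus n a b alpha E kap -> (forall s, in_I a b s -> kap (n - 1)%nat s <> 0) ->
  forall j, (1 <= j <= n - 1)%nat -> forall s, in_I a b s -> kap j s <> 0.
Proof.
  intros (_ & _ & _ & Hpos) Hlast j Hj s Hs.
  destruct (Nat.eq_dec j (n - 1)) as [->|Hne]; auto.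
  apply Rgt_not_eq, Hpos; auto; lia.
Qed.

Theorem theorem4p1 (n : nat) (a b : Rbar) (alpha : R -> vec)
  (E : nat -> R -> vec) (kap : nat -> R -> R) :
  (3 <= n)%nat ->
  Rbar_lt a b ->
  (forall i, (i < n)%nat -> smooth_on a b (fun t => alpha t i)) ->
  frenet_apparatus n a b alpha E kap ->
  (forall j, (1 <= j <= n - 1)%nat -> smooth_on a b (kap j)) ->
  (forall s, in_I a b s -> kap (n - 1)%nat s <> 0) ->
  (congruent_to_rectifying n a b alpha <->
   exists c : R, forall s, in_I a b s -> rect_lhs n kap c s = 0).
Proof.
  intros Hn Hab _ HF Hsmooth Hlast.
  assert (Hnz := frenet_curvature_neq0 n a b alpha E kap HF Hlast).
  rewrite (congruent_to_rectifying_iff n a b alpha E kap) by auto.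
  split.
  - intros [q Hq].
    set (h := frame_coord n alpha E q).
    assert (Hh : forall j, (j < n)%nat -> frenet_eq a b n kap h j)
      by (intros; apply frame_coord_frenet_eq; auto).
    destruct (frenet_eq_affine a b n kap h Hab (Hh 0%nat ltac:(lia)) Hq) as [c Hc].
    exists c. apply (rect_coord_frenet_eq_last n a b kap c); auto.
    apply (frenet_eq_ext a b n kap h); [lia | | apply Hh; lia].
    apply (frenet_eq_unique a b n kap); auto.
    + intros j Hj. apply Hnz; lia.
    + intros j Hj. split; [apply Hh; lia | apply rect_coord_frenet_eq; auto].
  - intros [c Hc].
    destruct (frenet_eq_frame_coord n a b alpha E kap (rect_coord kap c)) as [p Hp];
      [lia | auto | auto | apply rect_coord_frenet_system; auto |].
    exists p. intros s Hs. rewrite Hp by (auto; lia). reflexivity.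
Qed.
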